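(* Let $r,h\ge 2$ and $g,m$ be positive integers with $g+h<gr$, put $n=rg$, and let $q$ be a prime power with $q^m\ge \frac{mn}{r}$. If (i) $m\ge r$, or (ii) $m<r$ and there exists a $q$-ary $[r,r-m,\ge h+2]$ linear code, then there exists an MR $(n,r,h,1)$-LRC over a field of size $\ell=q^{\min\{hm,\frac{nm}{r}\}}$.
   Context: Definition: let $\ell$ be a prime power, $a,g,r,h$ positive integers with $ga+h<gr$, $n=gr$, $k=n-ga-h$. An MR (maximally recoverable) $(n,r,h,a)_\ell$-LRC is an $[n,k]$ linear code over $\mathbb{F}_\ell$ with a parity-check matrix $H\in\mathbb{F}_\ell^{(n-k)\times n}$ of the block form whose first $ga$ rows are block diagonal with diagonal blocks $A_1,\dots,A_g$ (each of size $a\times r$, the coordinates split into $g$ consecutive groups of size $r$) and whose last $h$ rows are $(D_1|\cdots|D_g)$ with each $D_i$ of size $h\times r$, such that (i) each $A_i$ generates an $[r,a,r-a+1]_\ell$ MDS code, and (ii) every set of $ag+h$ columns of $H$ consisting of any $a$ columns from each group together with any $h$ further columns is linearly independent over $\mathbb{F}_\ell$. ''An MR $(n,r,h,a)$-LRC over a field of size $\ell$'' means an MR $(n,r,h,a)_\ell$-LRC. *)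

From HB Require Import structures.
From mathcomp Require Import all_boot all_order all_algebra all_field.
Set Implicit Arguments. Unset Strict Implicit. Unset Printing Implicit Defensive.
Import GRing.Theory.
Local Open Scope ring_scope.

Definition wt (F : fieldType) (n : nat) (v : 'rV[F]_n) : nat :=
  #|[set j : 'I_n | v 0 j != 0]|.

Definition min_dist_ge (F : fieldType) (m n : nat) (C : 'M[F]_(m, n)) (d : nat) : Prop :=
  forall v : 'rV[F]_n, (v <= C)%MS -> v != 0 -> (d <= wt v)%N.

Definition has_min_dist (F : fieldType) (m n : nat) (C : 'M[F]_(m, n)) (d : nat) : Prop :=
  min_dist_ge C d /\ exists2 v : 'rV[F]_n, (v <= C)%MS & v != 0 /\ wt v = d.

Definition gen_code (F : fieldType) (m n : nat) (C : 'M[F]_(m, n)) (k d : nat) : Prop :=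
  \rank C = k /\ has_min_dist C d.

(* The block parity-check matrix
     H = [ diag(A_1,...,A_g) ; (D_1 | ... | D_g) ]
   columns are indexed by 'I_(\sum_(i<g) r), i.e. g consecutive groups of size r;
   the group of a column t is tagnat.sig1 t. *)
Definition LRC_H (F : fieldType) (g r a h : nat)
  (A : 'I_g -> 'M[F]_(a, r)) (D : 'I_g -> 'M[F]_(h, r))
  : 'M[F]_((\sum_(i < g) a)%N + h, \sum_(i < g) r) :=
  col_mx (@mxblock F g g (fun _ => a) (fun _ => r)
                   (fun i j => if i == j then A i else 0))
         (@mxrow F g (fun _ => r) h D).

(* The code with parity-check matrix LRC_H A D is an MR (n,r,h,a)-LRC, n = g*r. *)
Definition is_MR_LRC (F : fieldType) (g r h a : nat)
  (A : 'I_g -> 'M[F]_(a, r)) (D : 'I_g -> 'M[F]_(h, r)) : Prop :=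
  [/\ (0 < a)%N /\ (0 < g)%N /\ (0 < r)%N /\ (0 < h)%N, (g * a + h < g * r)%N,
   (forall i : 'I_g, gen_code (A i) a (r - a + 1)) &
   (* (ii) any a columns from each group together with any h further columns
      (i.e. any set S of g*a+h columns meeting every group in >= a columns)
      are linearly independent *)
   (forall S : {set 'I_(\sum_(i < g) r)},
       #|S| = (g * a + h)%N ->
       (forall i : 'I_g, (a <= #|[set t in S | tagnat.sig1 t == i]|)%N) ->
       \rank (colsub (fun k : 'I_#|S| => enum_val k) (LRC_H A D)) = #|S|)].

Definition exists_MR_LRC (l n r h a : nat) : Prop :=
  exists F : finFieldType, #|F| = l /\
    exists g : nat, n = (g * r)%N /\
    exists (A : 'I_g -> 'M[F]_(a, r)) (D : 'I_g -> 'M[F]_(h, r)),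
      is_MR_LRC A D.

Definition prime_power (q : nat) : Prop :=
  exists p k : nat, [/\ prime p, (0 < k)%N & q = (p ^ k)%N].

From HB Require Import structures.
From mathcomp Require Import all_boot all_order all_algebra all_field.
Set Implicit Arguments. Unset Strict Implicit. Unset Printing Implicit Defensive.
Import GRing.Theory.
Local Open Scope ring_scope.

(* Let K = F_q, E an extension of degree m and L an extension of E of degree
   s = min(h, g).  The local rows are all-ones; the global rows are the
   Frobenius powers beta ^ (q ^ t), t < h, of column labels
   beta_(i,j) = sum_(a < s) u_j gam_i ^ a X_a in L, where the u_j in E are
   (h+1)-wise F_q-independent (read off the parity-check matrix of the given
   code, or a basis when r <= m), the gam_i in E are distinct and X is an
   E-basis of L.  A left kernel vector of the columns S yields a q-polynomial
   of q-degree < h that is constant on each group of beta|S, hence vanishes on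
   all F_q-combinations of beta|S that are supported on S with zero group sums.
   There are q ^ h of them, and they are pairwise distinct by a sparse
   Vandermonde argument: a group carrying a nonzero coefficient contains two
   columns of S, so at most min(h, g) groups are involved, and each involves
   at most h + 1 columns.
   Hence the polynomial is zero, and then so is the local part. *)

Lemma card_finFieldExt (K : finFieldType) (L : fieldExtType K) :
  #|FinFieldExtType L| = (#|K| ^ \dim {:L})%N.
Proof. by rewrite -(card_vspace (fullv : {vspace finvect_type L})) card_vspacef. Qed.

Lemma natr_card_finField (K : finFieldType) : #|K|%:R = 0 :> K.
Proof.
have [p _ pK] := finPcharP K; apply/eqP; rewrite -(dvdn_pcharf pK).
set n := logn p #|K|; have cardK : #|K| = (p ^ n)%N := card_pprimeChar pK.
rewrite cardK dvdn_exp // lt0n; apply: contraTneq (finNzRing_gt1 K).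
by rewrite cardK => ->.
Qed.

Lemma separable_XnsubX (R : idomainType) n :
  n%:R = 0 :> R -> separable_poly ('X^n - 'X : {poly R}).
Proof.
move=> n0; rewrite unlock /separable_poly derivB derivXn derivX.
rewrite -mulr_natr -polyC_natr n0 mulr0 sub0r -[X in coprimep _ X]scaleN1r.
by rewrite coprimepZr ?coprimep1 // oppr_eq0 oner_eq0.
Qed.

(* Take the splitting field of X^Q - X, Q = q^d.  Its roots are the fixed
   points of the d-th power of Frobenius, hence form a subfield, which is
   everything; they are distinct by separability, so the field has Q elements. *)
Lemma finFieldExt_exists (K : finFieldType) d :
  (0 < d)%N -> {L : fieldExtType K | \dim {:L} = d}.
Proof.
move=> d_gt0; set Q := (#|K| ^ d)%N.
have Q_gt1 : (1 < Q)%N by rewrite (ltn_exp2l 0) // finNzRing_gt1.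
pose P (R : nzRingType) : {poly R} := 'X^Q - 'X.
have size_P R : size (P R) = Q.+1.
  by rewrite size_polyDl ?size_polyXn // size_polyN size_polyX ltnS.
have /FinSplittingFieldFor[L0 L0split] : P K != 0 by rewrite -size_poly_eq0 size_P.
exists L0; have [zs P_zs L0_zs] := L0split.
rewrite rmorphB rmorphXn /= map_polyX -/(P L0) in P_zs.
have [alpha _ alphaE] := finField_galois_generator (sub1v {:L0}).
rewrite dimv1 expn1 in alphaE.
pose Em := fixedSpace (alpha ^+ d)%g.
have zsE : zs =i Em.
  move=> z; rewrite -root_prod_XsubC -(eqp_root P_zs) /root !hornerE subr_eq0.
  rewrite (sameP fixedSpaceP eqP) /Q; congr (_ == z).
  elim: (d) => [|i IHi]; first by rewrite gal_id.
  by rewrite expgSr expnSr exprM IHi galM ?alphaE ?memvf.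
have EmT : Em = fullv.
  apply/eqP; rewrite eqEsubv subvf -L0_zs -[Em]subfield_closed agenvS //.
  by rewrite subv_add sub1v; apply/span_subvP => z; rewrite zsE.
have uniq_zs : uniq zs.
  rewrite -separable_prod_XsubC -(eqp_separable P_zs) separable_XnsubX //.
  by rewrite natrX -(rmorph_nat (in_alg L0)) natr_card_finField rmorph0 expr0n gtn_eqF.
have : #|FinFieldExtType L0| = Q.
  apply: succn_inj; rewrite -(size_P L0) (eqp_size P_zs) size_prod_XsubC.
  rewrite -(@card_uniqP (FinFieldExtType L0) zs uniq_zs); congr _.+1.
  by apply: eq_card => z; rewrite zsE EmT memvf.
by rewrite card_finFieldExt => /eqP; rewrite eqn_exp2l ?finNzRing_gt1 // => /eqP.
Qed.

Section Linearized.
Variables (K : finFieldType) (F : fieldType) (kap : {rmorphism K -> F}).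
Local Notation q := #|K|.

Lemma exprD_card_expn t (x y : F) : (x + y) ^+ (q ^ t) = x ^+ (q ^ t) + y ^+ (q ^ t).
Proof.
have [p p_pr pK] := finPcharP K; apply: exprDn_pchar.
by rewrite (card_pprimeChar pK) -expnM pnatX pnatE // (rmorph_pchar kap pK).
Qed.

Lemma rmorphX_card_expn t (a : K) : kap a ^+ (q ^ t) = kap a.
Proof.
by elim: t => [|t IHt]; rewrite ?expr1 // expnSr exprM IHt -rmorphXn expf_card.
Qed.

Definition linpoly h (c : 'rV[F]_h) : {poly F} := \sum_(t < h) c 0 t *: 'X^(q ^ t).

Variables (h : nat) (c : 'rV[F]_h).

Lemma horner_linpoly x : (linpoly c).[x] = \sum_(t < h) c 0 t * x ^+ (q ^ t).
Proof. by rewrite horner_sum; apply: eq_bigr => t _; rewrite hornerZ hornerXn. Qed.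

Lemma horner_linpoly_lincomb (I : finType) (y : I -> K) (z : I -> F) :
  (linpoly c).[\sum_i kap (y i) * z i] = \sum_i kap (y i) * (linpoly c).[z i].
Proof.
have linpoly0 : (linpoly c).[0] = 0.
  rewrite horner_linpoly big1 // => t _.
  by rewrite expr0n gtn_eqF ?mulr0 // expn_gt0 ltnW ?finNzRing_gt1.
have linpolyD : {morph horner (linpoly c) : x x' / x + x'}.
  move=> x x'; rewrite !horner_linpoly -big_split.
  by apply: eq_bigr => t _; rewrite exprD_card_expn mulrDr.
rewrite (big_morph (horner (linpoly c)) linpolyD linpoly0); apply: eq_bigr => i _.
rewrite !horner_linpoly mulr_sumr; apply: eq_bigr => t _.
by rewrite exprMn rmorphX_card_expn mulrCA.
Qed.

Lemma coef_linpoly (t : 'I_h) : (linpoly c)`_(q ^ t) = c 0 t.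
Proof.
rewrite coef_sum (bigD1 t) //= coefZ coefXn eqxx mulr1 big1 ?addr0 // => t' ne_t't.
by rewrite coefZ coefXn eqn_exp2l ?finNzRing_gt1 // eq_sym val_eqE (negPf ne_t't) mulr0.
Qed.

Lemma linpoly_eq0 : (linpoly c == 0) = (c == 0).
Proof.
apply/eqP/eqP => [c0 | ->]; last by rewrite /linpoly big1 // => t _; rewrite mxE scale0r.
by apply/rowP => t; rewrite -coef_linpoly c0 coef0 mxE.
Qed.

Lemma size_linpoly : (size (linpoly c) <= (q ^ h.-1).+1)%N.
Proof.
apply: leq_trans (size_sum _ _ _) _; apply/bigmax_leqP => t _.
apply: leq_trans (size_scale_leq _ _) _; rewrite size_polyXn ltnS leq_exp2l ?finNzRing_gt1 //.
by rewrite -ltnS prednK // (leq_ltn_trans _ (ltn_ord t)).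
Qed.

Lemma linpoly_roots_lt (s : seq F) :
  c != 0 -> uniq s -> all (root (linpoly c)) s -> (size s < q ^ h)%N.
Proof.
move=> c_neq0 s_uniq s_roots.
have h_gt0 : (0 < h)%N by case: (h) c c_neq0 => // c'; rewrite thinmx0 eqxx.
have p_neq0 : linpoly c != 0 by rewrite linpoly_eq0.
have := leq_trans (max_poly_roots p_neq0 s_roots s_uniq) size_linpoly.
by rewrite ltnS => /leq_ltn_trans; apply; rewrite ltn_exp2l ?finNzRing_gt1 ?ltn_predL.
Qed.

End Linearized.

Section Groups.
Variables (g r : nat).
Local Notation N := (\sum_(i < g) r)%N.
Local Notation Rank := (@tagnat.Rank g (fun=> r)).

Lemma Rank_inj i : injective (Rank i).
Proof.
move=> j j' eq_jj'; apply/val_inj/eqP.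
by move: (@tagnat.eq_Rank g (fun=> r) i i j j'); rewrite eq_jj' !eqxx.
Qed.

Lemma sig2_Rank i (j : 'I_r) : tagnat.sig2 (Rank i j) = j.
Proof. by apply: val_inj; rewrite tagnat.Rank2K. Qed.

Lemma big_sig1 (V : nmodType) i (f : 'I_N -> V) :
  \sum_(t | tagnat.sig1 t == i) f t = \sum_(j < r) f (Rank i j).
Proof.
rewrite -(big_imset _ (in2W (@Rank_inj i))) /=; apply: eq_bigl => t.
apply/eqP/imsetP => [<- | [j _ ->]]; last by rewrite tagnat.Rank1K.
by exists (tagnat.sig2 t); rewrite ?tagnat.sig2K.
Qed.

Lemma card_sig1_partition (S : {set 'I_N}) :
  #|S| = (\sum_(i < g) #|[set t in S | tagnat.sig1 t == i]|)%N.
Proof.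
rewrite -sum1_card (partition_big (@tagnat.sig1 g (fun=> r)) predT) //=.
by apply: eq_bigr => i _; rewrite sum1dep_card; apply: eq_card => t; rewrite !inE.
Qed.

End Groups.

Lemma Rank_sig1_ord0 g (t : 'I_(\sum_(i < g) 1)) :
  @tagnat.Rank g (fun=> 1%N) (tagnat.sig1 t) ord0 = t.
Proof. by rewrite -[RHS]tagnat.sig2K; congr tagnat.Rank; rewrite [RHS]ord1. Qed.

Lemma sum_pos_bounds (I : finType) (c : I -> nat) (h : nat) :
  (forall i, 0 < c i)%N -> (\sum_i c i = #|I| + h)%N ->
  (forall i, c i <= h.+1)%N /\ (#|[set i | 1 < c i]| <= h)%N.
Proof.
move=> c_gt0; have -> : (\sum_i c i = #|I| + \sum_i (c i).-1)%N.
  by rewrite -sum1_card -big_split; apply: eq_bigr => i _; rewrite /= add1n prednK.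
move=> /addnI <-; split => [i | ].
  by rewrite (bigD1 i) //=; case: (c i) => // n; rewrite ltnS leq_addr.
rewrite -sum1_card big_mkcond /=; apply: leq_sum => i _.
by rewrite inE; case: (c i) => [|[|n]].
Qed.

Lemma sum_eq0_other_neq0 (V : zmodType) (I : finType) (P : pred I) (y : I -> V) i0 :
  \sum_(i | P i) y i = 0 -> P i0 -> y i0 != 0 ->
  exists2 i1, i1 != i0 & P i1 && (y i1 != 0).
Proof.
move=> y_sum P_i0 y_i0; apply/exists_inP; apply: contraLR y_i0 => /exists_inPn y_others.
rewrite negbK -y_sum (bigD1 i0) //= big1 ?addr0 // => i /andP[P_i ne_i].
by apply/eqP; have := y_others i ne_i; rewrite P_i negbK.
Qed.

Section Balanced.
Variables (V : finZmodType) (g r : nat) (S : {set 'I_(\sum_(i < g) r)}).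
Local Notation N := (\sum_(i < g) r)%N.

Definition balanced (y : {ffun 'I_N -> V}) : bool :=
  [forall t, (t \notin S) ==> (y t == 0)] &&
  [forall i, \sum_(t | tagnat.sig1 t == i) y t == 0].

Lemma balancedP (y : {ffun 'I_N -> V}) :
  reflect ((forall t, t \notin S -> y t = 0) /\
           (forall i, \sum_(t | tagnat.sig1 t == i) y t = 0))
          (balanced y).
Proof.
apply: (iffP andP) => [[/forallP yS /forallP ysum] | [yS ysum]]; split.
- by move=> t tS; apply/eqP; move/implyP: (yS t); apply.
- by move=> i; apply/eqP.
- by apply/forallP => t; apply/implyP => /yS ->.
- by apply/forallP => i; rewrite ysum.
Qed.

Lemma balancedB (y1 y2 : {ffun 'I_N -> V}) :
  balanced y1 -> balanced y2 -> balanced (y1 - y2).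
Proof.
move=> /balancedP[y1S y1sum] /balancedP[y2S y2sum]; apply/balancedP; split.
  by move=> t tS; rewrite !ffunE (y1S _ tS) (y2S _ tS) subr0.
move=> i; rewrite (eq_bigr (fun t => y1 t - y2 t)) => [|t _]; last by rewrite !ffunE.
by rewrite sumrB y1sum y2sum subr0.
Qed.

Lemma balanced_group_gt1 (y : {ffun 'I_N -> V}) t :
  balanced y -> y t != 0 -> (1 < #|[set t' in S | tagnat.sig1 t' == tagnat.sig1 t]|)%N.
Proof.
move=> /balancedP[yS ysum] y_t.
have [t' ne_t't /andP[t't y_t']] := sum_eq0_other_neq0 (ysum _) (eqxx _) y_t.
have inS t'' : y t'' != 0 -> t'' \in S by move=> y_t''; apply: contraR y_t'' => /yS->.
have sub_tt' : [set t; t'] \subset [set t'' in S | tagnat.sig1 t'' == tagnat.sig1 t].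
  by apply/subsetP => t''; rewrite !inE => /orP[] /eqP->; rewrite ?eqxx ?t't inS.
by apply: leq_trans (subset_leq_card sub_tt'); rewrite cards2 eq_sym ne_t't.
Qed.

Section Pivots.
Variable piv : 'I_g -> 'I_N.
Hypotheses (pivS : forall i, piv i \in S) (sig1_piv : forall i, tagnat.sig1 (piv i) = i).

Definition nonpivots := S :\: [set piv i | i in 'I_g].

Lemma card_nonpivots : #|nonpivots| = (#|S| - g)%N.
Proof.
have piv_inj : injective piv by move=> i j eq_ij; rewrite -(sig1_piv i) eq_ij sig1_piv.
have pivs_sub : [set piv i | i in 'I_g] \subset S by apply/subsetP => _ /imsetP[i _ ->].
by rewrite cardsD (setIidPr pivs_sub) card_imset // card_ord.
Qed.

Definition zero_ext (l : {ffun {t | t \in nonpivots} -> V}) (t : 'I_N) : V :=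
  if insub t is Some st then l st else 0.

Definition pivot_ext (l : {ffun {t | t \in nonpivots} -> V}) : {ffun 'I_N -> V} :=
  [ffun t => zero_ext l t -
     if t == piv (tagnat.sig1 t)
     then \sum_(t' | tagnat.sig1 t' == tagnat.sig1 t) zero_ext l t' else 0].

Lemma pivot_ext_val l (st : {t | t \in nonpivots}) : pivot_ext l (val st) = l st.
Proof.
rewrite ffunE /zero_ext valK; case: eqP => [val_piv | _]; last by rewrite subr0.
by have := valP st; rewrite val_piv !inE imset_f ?andbF.
Qed.

Lemma pivot_ext_inj : injective pivot_ext.
Proof. by move=> l1 l2 eq_ext; apply/ffunP => st; rewrite -!pivot_ext_val eq_ext. Qed.

Lemma pivot_ext_balanced l : balanced (pivot_ext l).
Proof.
apply/balancedP; split => [t tS | i].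
  rewrite ffunE /zero_ext insubN ?inE ?(negPf tS) ?andbF // sub0r.
  by case: eqP => [t_piv | _]; [move: tS; rewrite t_piv pivS | rewrite oppr0].
rewrite (eq_bigr (fun t => zero_ext l t - if t == piv i
    then \sum_(t' | tagnat.sig1 t' == i) zero_ext l t' else 0)) => [|t /eqP <-]; last first.
  by rewrite ffunE.
rewrite sumrB -big_mkcondr /= [X in _ - X](big_pred1 (piv i)) ?subrr // => t /=.
by case: (eqVneq t (piv i)) => [-> | ne_t]; rewrite ?sig1_piv ?eqxx ?andbF.
Qed.

End Pivots.

(* Fixing a pivot of S in each group, arbitrary values on the other columns of
   S extend uniquely to a balanced vector. *)
Lemma card_balanced :
  (forall i : 'I_g, 0 < #|[set t in S | tagnat.sig1 t == i]|)%N ->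
  (#|V| ^ (#|S| - g) <= #|[set y | balanced y]|)%N.
Proof.
move=> S_meets.
have /fin_all_exists[piv pivP] i : exists t, (t \in S) && (tagnat.sig1 t == i).
  by have /card_gt0P[t] := S_meets i; rewrite inE; exists t.
have pivS i : piv i \in S by case/andP: (pivP i).
have sig1_piv i : tagnat.sig1 (piv i) = i by case/andP: (pivP i) => _ /eqP.
have card_dom : #|{ffun {t | t \in nonpivots piv} -> V}| = (#|V| ^ (#|S| - g))%N.
  by rewrite card_ffun card_sig -(card_nonpivots pivS sig1_piv).
rewrite -card_dom -cardsT -(card_imset _ (@pivot_ext_inj piv)).
by apply/subset_leq_card/subsetP => _ /imsetP[l _ ->]; rewrite inE pivot_ext_balanced.
Qed.

End Balanced.

Section MRParityCheck.
Variables (K : finFieldType) (F : fieldType) (kap : {rmorphism K -> F}) (g r h : nat).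
Local Notation N := (\sum_(i < g) r)%N.
Local Notation q := #|K|.

Definition ones_blocks : 'I_g -> 'M[F]_(1, r) := fun=> const_mx 1.

Definition moore_blocks (beta : 'I_N -> F) : 'I_g -> 'M[F]_(h, r) :=
  fun i => \matrix_(t < h, j < r) beta (@tagnat.Rank g (fun=> r) i j) ^+ (q ^ t).

Definition balanced_free (S : {set 'I_N}) (beta : 'I_N -> F) :=
  forall y : {ffun 'I_N -> K},
    balanced S y -> \sum_t kap (y t) * beta t = 0 -> y = 0.

Lemma balanced_lincomb (S : {set 'I_N}) (y : {ffun 'I_N -> K}) (z : 'I_N -> F)
    (lam : 'I_g -> F) :
  balanced S y -> {in S, forall t, z t = lam (tagnat.sig1 t)} ->
  \sum_t kap (y t) * z t = 0.
Proof.
move=> /balancedP[yS ysum] zS.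
rewrite (eq_bigr (fun t => kap (y t) * lam (tagnat.sig1 t))) => [|t _]; last first.
  by case: (boolP (t \in S)) => [/zS-> // | /yS->]; rewrite rmorph0 !mul0r.
rewrite (partition_big (@tagnat.sig1 g (fun=> r)) predT) //= big1 // => i _.
rewrite (eq_bigr (fun t => kap (y t) * lam i)) => [|t /eqP-> //].
by rewrite -mulr_suml -rmorph_sum ysum rmorph0 mul0r.
Qed.

Lemma mulmx_LRC_H beta (lam : 'rV[F]_(\sum_(i < g) 1)) (c : 'rV[F]_h) col :
  (row_mx lam c *m LRC_H ones_blocks (moore_blocks beta)) 0 col =
  lam 0 (@tagnat.Rank g (fun=> 1%N) (tagnat.sig1 col) ord0) + (linpoly K c).[beta col].
Proof.
rewrite mul_row_col mxE horner_linpoly; congr (_ + _); rewrite mxE.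
  rewrite (eq_bigr (fun rho => if tagnat.sig1 rho == tagnat.sig1 col then lam 0 rho else 0)).
    by rewrite -big_mkcond big_sig1 big_ord1.
  by move=> rho _; rewrite !mxE; case: eqP => _; rewrite ?mxE ?mulr1 ?mulr0.
by apply: eq_bigr => t _; rewrite !mxE tagnat.sig2K.
Qed.

Variables (beta : 'I_N -> F) (S : {set 'I_N}).
Hypotheses (cardS : #|S| = (g + h)%N)
  (S_meets : forall i : 'I_g, (0 < #|[set t in S | tagnat.sig1 t == i]|)%N)
  (beta_free : balanced_free S beta).

Lemma linpoly_groupwise_const_eq0 (c : 'rV[F]_h) (lam : 'I_g -> F) :
  {in S, forall t, (linpoly K c).[beta t] = lam (tagnat.sig1 t)} -> c = 0.
Proof.
move=> c_const; apply/eqP; apply: contraT => c_neq0.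
pose Phi (y : {ffun 'I_N -> K}) := \sum_t kap (y t) * beta t.
have Phi_inj : {in [set y | balanced S y] &, injective Phi}.
  move=> y1 y2; rewrite !inE => y1_bal y2_bal eq_Phi; apply/eqP; rewrite -subr_eq0.
  apply/eqP; apply: beta_free; first exact: balancedB.
  rewrite -[RHS](subrr (Phi y1)) {2}eq_Phi /Phi -sumrB.
  by apply: eq_bigr => t _; rewrite !ffunE rmorphB mulrBl.
have Phi_roots : all (root (linpoly K c)) [seq Phi y | y <- enum [set y | balanced S y]].
  apply/allP => x /mapP[y]; rewrite mem_enum inE => y_bal ->.
  by rewrite /root horner_linpoly_lincomb (balanced_lincomb y_bal c_const).
have := linpoly_roots_lt c_neq0 _ Phi_roots.
rewrite map_inj_in_uniq ?enum_uniq => [|y1 y2]; last by rewrite !mem_enum; apply: Phi_inj.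
rewrite size_map -cardE => /(_ erefl); rewrite ltnNge.
by have := card_balanced K S_meets; rewrite cardS addKn => ->.
Qed.

Lemma LRC_H_colsub_row_free :
  row_free (colsub (fun k : 'I_#|S| => enum_val k) (LRC_H ones_blocks (moore_blocks beta))).
Proof.
apply/inj_row_free => u uH0.
rewrite -[u]hsubmxK; set lam := lsubmx u; set c := rsubmx u.
pose lam_g i := lam 0 (@tagnat.Rank g (fun=> 1%N) i ord0).
have lam_c_eq0 col : col \in S -> lam_g (tagnat.sig1 col) + (linpoly K c).[beta col] = 0.
  move=> colS; rewrite -mulmx_LRC_H hsubmxK.
  have := congr1 (fun M : 'M[F]_(1, #|S|) => M 0 (enum_rank_in colS col)) uH0.
  by rewrite mulmx_colsub !mxE (enum_rankK_in colS colS).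
have c0 : c = 0.
  apply: (@linpoly_groupwise_const_eq0 _ (fun i => - lam_g i)) => t /lam_c_eq0/eqP.
  by rewrite addrC addr_eq0 => /eqP.
have lam0 : lam = 0.
  apply/rowP => rho; rewrite [RHS]mxE -(Rank_sig1_ord0 rho).
  have /card_gt0P[col] := S_meets (tagnat.sig1 rho).
  rewrite inE => /andP[colS /eqP <-]; rewrite -[RHS](lam_c_eq0 col colS).
  have /eqP-> : linpoly K c == 0 by rewrite linpoly_eq0 c0.
  by rewrite horner0 addr0.
by rewrite lam0 c0 row_mx0.
Qed.

End MRParityCheck.

Arguments ones_blocks {F g r}.

Lemma vandermonde_sparse_eq0 (E : fieldType) (I : finType) (gam W : I -> E) (s : nat) :
  injective gam -> (#|[set i | (W i != 0)%R]| <= s)%N ->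
  (forall a : 'I_s, \sum_i W i * gam i ^+ a = 0) -> forall i, W i = 0.
Proof.
move=> gam_inj supp_le W_pow.
have W_poly (Q : {poly E}) : (size Q <= s)%N -> \sum_i W i * Q.[gam i] = 0.
  move=> sQ; under eq_bigr => i _ do rewrite (horner_coef_wide _ sQ) mulr_sumr.
  rewrite exchange_big big1 // => a _.
  by under eq_bigr do rewrite mulrCA; rewrite -mulr_sumr W_pow mulr0.
set D := [set i | W i != 0] in supp_le *; move=> i0; apply/eqP; apply: contraT => W_i0.
pose Q := \prod_(z <- [seq gam i | i <- enum (D :\ i0)]) ('X - z%:P).
have rootQ i : root Q (gam i) = (i \in D :\ i0).
  by rewrite root_prod_XsubC (mem_map gam_inj) mem_enum.
have i0D : i0 \in D by rewrite inE.
have sQ : (size Q <= s)%N.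
  by rewrite size_prod_XsubC size_map -cardE; move: supp_le; rewrite (cardsD1 i0) i0D.
have := W_poly Q sQ; rewrite (bigD1 i0) //= big1 ?addr0 => [|i ne_i].
  by move/eqP; rewrite mulf_eq0 (negPf W_i0) -[Q.[_] == 0]/(root Q _) rootQ !inE eqxx.
case: (boolP (i \in D)) => [iD | ]; last by rewrite inE negbK => /eqP->; rewrite mul0r.
by apply/eqP; rewrite mulf_eq0 -[Q.[_] == 0]/(root Q _) rootQ in_setD1 ne_i iD orbT.
Qed.

Lemma wt_row_sig1 (F : fieldType) g r (S : {set 'I_(\sum_(i < g) r)})
    (y : 'I_(\sum_(i < g) r) -> F) i :
  (forall t, t \notin S -> y t = 0) ->
  (wt (\row_(j < r) y (@tagnat.Rank g (fun=> r) i j)) <=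
     #|[set t in S | tagnat.sig1 t == i]|)%N.
Proof.
move=> yS; rewrite /wt -(card_imset _ (@Rank_inj g r i)).
apply/subset_leq_card/subsetP => k /imsetP[j]; rewrite !inE mxE => y_ij ->.
by rewrite tagnat.Rank1K eqxx andbT; apply: contraR y_ij => /yS->.
Qed.

Section VandermondeBeta.
Variables (K : finFieldType) (E : fieldType) (iota : {rmorphism K -> E}).
Variables (L : fieldExtType E) (g r h s : nat).
Variables (X : s.-tuple L) (u : 'I_r -> E) (gam : 'I_g -> E).
Local Notation N := (\sum_(i < g) r)%N.
Local Notation Rank := (@tagnat.Rank g (fun=> r)).

Definition vandermonde_beta (t : 'I_N) : L :=
  \sum_(a < s) (u (tagnat.sig2 t) * gam (tagnat.sig1 t) ^+ a) *: X`_a.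

Lemma vandermonde_beta_pow_sums (y : 'I_N -> K) :
  free X -> \sum_t in_alg L (iota (y t)) * vandermonde_beta t = 0 ->
  forall a : 'I_s, \sum_i (\sum_(j < r) iota (y (Rank i j)) * u j) * gam i ^+ a = 0.
Proof.
move=> /freeP X_free y_beta.
have coefs : \sum_(b < s) (\sum_t iota (y t) *
    (u (tagnat.sig2 t) * gam (tagnat.sig1 t) ^+ b)) *: X`_b = 0.
  rewrite -[RHS]y_beta; under [RHS]eq_bigr => t _ do
    rewrite mulr_algl /vandermonde_beta scaler_sumr.
  rewrite exchange_big; apply: eq_bigr => b _; rewrite scaler_suml.
  by apply: eq_bigr => t _; rewrite scalerA.
move=> a; rewrite -[RHS](X_free _ coefs a).
rewrite (partition_big (@tagnat.sig1 g (fun=> r)) predT) //=.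
apply: eq_bigr => i _; rewrite mulr_suml big_sig1; apply: eq_bigr => j _.
by rewrite tagnat.Rank1K sig2_Rank mulrA.
Qed.

Hypotheses (X_free : free X) (gam_inj : injective gam) (h_g_le_s : (minn h g <= s)%N).
Hypothesis u_free : forall y : 'rV[K]_r,
  (wt y <= h.+1)%N -> \sum_j iota (y 0 j) * u j = 0 -> y = 0.

Lemma vandermonde_beta_balanced_free (S : {set 'I_N}) :
  #|S| = (g + h)%N -> (forall i : 'I_g, 0 < #|[set t in S | tagnat.sig1 t == i]|)%N ->
  balanced_free (in_alg L \o iota) S vandermonde_beta.
Proof.
move=> cardS S_meets y y_bal y_beta; have /balancedP[yS _] := y_bal.
have card_grps : (\sum_i #|[set t in S | tagnat.sig1 t == i]| = #|'I_g| + h)%N.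
  by rewrite -card_sig1_partition cardS card_ord.
have [grp_le grp_gt1_le] := sum_pos_bounds S_meets card_grps.
pose W i := \sum_(j < r) iota (y (Rank i j)) * u j.
have W_supp : (#|[set i | (W i != 0)%R]| <= s)%N.
  apply: leq_trans h_g_le_s; rewrite leq_min; apply/andP; split; last first.
    by apply: leq_trans (max_card _) _; rewrite card_ord.
  apply: leq_trans grp_gt1_le; apply/subset_leq_card/subsetP => i; rewrite !inE.
  apply: contraR => /negbTE grp_le1; rewrite /W big1 // => j _.
  suff -> : y (Rank i j) = 0 by rewrite rmorph0 mul0r.
  apply/eqP; apply: contraFT grp_le1 => y_ij.
  by have := balanced_group_gt1 y_bal y_ij; rewrite tagnat.Rank1K.
have W0 := vandermonde_sparse_eq0 gam_inj W_supp (vandermonde_beta_pow_sums X_free y_beta).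
apply/ffunP => t; rewrite ffunE -(tagnat.sig2K t); set i := tagnat.sig1 t.
have y_i0 : \row_(j < r) y (Rank i j) = 0.
  apply: u_free; first exact: leq_trans (wt_row_sig1 _ yS) (grp_le i).
  by rewrite -[RHS](W0 i); apply: eq_bigr => j _; rewrite mxE.
by have := congr1 (fun M : 'rV[K]_r => M 0 (tagnat.sig2 t)) y_i0; rewrite !mxE.
Qed.

End VandermondeBeta.

Lemma gen_code_const1 (F : fieldType) r :
  (0 < r)%N -> gen_code (const_mx 1 : 'M[F]_(1, r)) 1 (r - 1 + 1).
Proof.
move=> r_gt0; rewrite subnK //.
have wt_scaled (a : F) : a != 0 -> wt (a *: (const_mx 1 : 'M[F]_(1, r))) = r.
  move=> a_neq0; rewrite /wt -[RHS]card_ord -cardsT; apply: eq_card => j.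
  by rewrite !inE !mxE mulr1 a_neq0.
have ones_neq0 : (const_mx 1 : 'M[F]_(1, r)) != 0.
  by apply/matrix0Pn; exists 0, (Ordinal r_gt0); rewrite mxE oner_eq0.
split; first by apply/eqP; rewrite eqn_leq rank_leq_row lt0n mxrank_eq0.
split.
  move=> v /sub_rVP[a ->]; have [-> | a_neq0] := eqVneq a 0; first by rewrite scale0r eqxx.
  by rewrite wt_scaled.
exists (const_mx 1); first exact: submx_refl.
by split => //; rewrite -[const_mx 1]scale1r wt_scaled ?oner_eq0.
Qed.

Definition rows_free_upto (F : fieldType) r d (M : 'M[F]_(r, d)) (w : nat) :=
  forall y : 'rV[F]_r, (wt y <= w)%N -> y *m M = 0 -> y = 0.

Lemma rows_free_upto_coker (F : fieldType) r (C : 'M[F]_r) w :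
  min_dist_ge C w.+1 -> rows_free_upto (col_base (cokermx C)) w.
Proof.
move=> C_dist y wt_y yM0; apply/eqP; apply: contraTT wt_y => y_neq0.
have yC : (y <= C)%MS by rewrite submxE -(mulmx_base (cokermx C)) mulmxA yM0 mul0mx.
by rewrite -ltnNge; apply: C_dist.
Qed.

Lemma parity_matrix_exists (q r m h : nat) :
  prime_power q ->
  ((r <= m)%N \/
   ((m < r)%N /\
    exists (K : finFieldType) (C : 'M[K]_r),
      #|K| = q /\ \rank C = (r - m)%N /\ min_dist_ge C (h + 2))) ->
  exists (K : finFieldType) (d : nat) (M : 'M[K]_(r, d)),
    [/\ #|K| = q, (d <= m)%N & rows_free_upto M h.+1].
Proof.
move=> [p [k [p_pr k_gt0 ->]]] [r_le_m | [m_lt_r [K [C [cardK [rankC C_dist]]]]]].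
  have [K _ cardK] := pPrimePowerField p_pr k_gt0.
  by exists K, r, 1%:M; split=> // y _; rewrite mulmx1.
(* [split=> //] would try to decide [d <= m] by evaluating the rank. *)
exists K, (\rank (cokermx C)), (col_base (cokermx C)); split.
- exact: cardK.
- by rewrite mxrank_coker rankC subKn // ltnW.
- by apply: rows_free_upto_coker; rewrite -(addn2 h).
Qed.

Lemma free_tuple_exists (K : fieldType) (V : vectType K) d :
  (d <= \dim {:V})%N -> {X : d.-tuple V | free X}.
Proof.
move=> d_le; have take_d : minn d (\dim {:V}) = d by apply/minn_idPl.
exists (tcast take_d (take_tuple d (vbasis {:V}))).
rewrite val_tcast /=; apply: (@catl_free _ _ (drop d (vbasis {:V}))).
by rewrite cat_take_drop; apply: basis_free (vbasisP _).
Qed.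

Lemma rows_free_upto_falg (K : fieldType) (A : falgType K) r d (M : 'M[K]_(r, d)) w :
  (d <= \dim {:A})%N -> rows_free_upto M w ->
  exists u : 'I_r -> A, forall y : 'rV[K]_r,
    (wt y <= w)%N -> \sum_j in_alg A (y 0 j) * u j = 0 -> y = 0.
Proof.
move=> /free_tuple_exists[X /freeP X_free] M_free.
exists (fun j => \sum_(b < d) M j b *: X`_b) => y wt_y yu0; apply: M_free wt_y _.
apply/rowP => b; rewrite [RHS]mxE; apply: (X_free (fun b => (y *m M) 0 b)).
rewrite -[RHS]yu0; under [RHS]eq_bigr do rewrite mulr_algl scaler_sumr.
rewrite exchange_big; apply: eq_bigr => b' _; rewrite !mxE scaler_suml.
by apply: eq_bigr => j _; rewrite scalerA.
Qed.

Local Close Scope ring_scope.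

Theorem lemma3p8 (r h g m n q : nat) :
  (2 <= r)%N -> (2 <= h)%N -> (0 < g)%N -> (0 < m)%N ->
  (g + h < g * r)%N -> n = (r * g)%N ->
  prime_power q ->
  ((m * n) %/ r <= q ^ m)%N ->
  ((r <= m)%N \/
   ((m < r)%N /\
    exists (K : finFieldType) (C : 'M[K]_r),
      #|K| = q /\ \rank C = (r - m)%N /\ min_dist_ge C (h + 2))) ->
  exists_MR_LRC (q ^ minn (h * m) ((n * m) %/ r)) n r h 1.
Proof.
move=> r_ge2 h_ge2 g_gt0 m_gt0 ghr nE q_pp q_large parity.
have mn_r : (m * n) %/ r = m * g by rewrite nE mulnCA mulKn // ltnW.
have [K [d [M [cardK d_le_m M_free]]]] := parity_matrix_exists q_pp parity.
have [E0 dimE0] := finFieldExt_exists K m_gt0.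
have d_le_dimE0 : d <= \dim {:E0} by rewrite dimE0.
have [u u_free] := rows_free_upto_falg d_le_dimE0 M_free.
pose E := FinFieldExtType E0.
have cardE : #|E| = q ^ m by rewrite card_finFieldExt dimE0 cardK.
have s_gt0 : 0 < minn h g by rewrite leq_min g_gt0 ltnW.
have [L dimL] := finFieldExt_exists E s_gt0.
have [gam gam_inj] : exists gam : 'I_g -> E, injective gam.
  have g_le_E : g <= #|E| by rewrite cardE (leq_trans _ q_large) // mn_r leq_pmull.
  exists (fun i => enum_val (widen_ord g_le_E i)) => i j /enum_val_inj eq_ij.
  by apply/val_inj; apply: (congr1 val eq_ij).
exists (FinFieldExtType L); split.
  by rewrite card_finFieldExt dimL cardE -expnM minnMr [h * m]mulnC [n * m]mulnC mn_r.
exists g; split; first by rewrite nE mulnC.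
pose beta := vandermonde_beta (vbasis {:L}) u gam.
exists ones_blocks, (moore_blocks K h beta); split.
- by split=> //; split=> //; split; apply: ltnW.
- by rewrite muln1.
- by move=> i; apply: gen_code_const1; apply: ltnW.
move=> S; rewrite muln1 => cardS S_meets.
have beta_free := vandermonde_beta_balanced_free (basis_free (vbasisP _)) gam_inj
  (eq_leq (esym dimL)) u_free cardS S_meets.
move/eqP: (LRC_H_colsub_row_free cardS S_meets beta_free) ->.
by rewrite sum_nat_const card_ord muln1 cardS.
Qed.
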